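(* Let $A$ be a finite dimensional quiver algebra of finite global dimension with $n$ vertices, whose Cartan matrix $\omega_A$ (with respect to a fixed numbering $1,\ldots,n$ of the vertices) is lower triangular, and let $\omega_A=\hat{U}_1 R \hat{U}_2$ be a Bruhat decomposition of $\omega_A$. Then the Coxeter permutation $p_A$ of $A$ coincides with the row-permutation associated to the permutation matrix $R$.
   Context: A quiver algebra is $A=KQ/I$ with $K$ a field, $Q$ a finite connected quiver with vertices $1,\ldots,n$ and $I$ an admissible ideal; $e_i$ are the primitive idempotents of the vertices. The Cartan matrix is the $n\times n$ matrix $\omega_A=(\omega_{ij})$ with $\omega_{ij}=\dim_K e_jAe_i$; for finite global dimension it is invertible over $\mathbb{Z}$, and the Coxeter matrix is $C_A=-\omega_A^T\omega_A^{-1}$. A Bruhat decomposition of an invertible real matrix $M$ is a factorisation $M=U_1PU_2$ with $U_1,U_2$ upper triangular and $P$ a permutation matrix; $P$ is uniquely determined by $M$. For a permutation matrix $P$, the row-permutation $p_r$ is given by $p_r(i)=j$ if the unique non-zero entry of row $i$ of $P$ lies in column $j$, and the column-permutation $p_c$ by $p_c(i)=j$ if the unique non-zero entry of column $i$ lies in row $j$. The Coxeter permutation $p_A$ is the column-permutation of the permutation matrix in a Bruhat decomposition of $C_A$. *)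

From HB Require Import structures.
From mathcomp Require Import all_boot all_order all_algebra all_fingroup.
From mathcomp Require Import all_classical all_reals.
Set Implicit Arguments. Unset Strict Implicit. Unset Printing Implicit Defensive.
Import Order.TTheory GRing.Theory Num.Theory.
Local Open Scope ring_scope.

(* Upper / lower triangular square matrices (indices 0..n-1 stand for 1..n). *)
Definition upper_triangular (R : nzRingType) (n : nat) (A : 'M[R]_n) : Prop :=
  forall i j : 'I_n, (j < i)%N -> A i j = 0.
Definition lower_triangular (R : nzRingType) (n : nat) (A : 'M[R]_n) : Prop :=
  forall i j : 'I_n, (i < j)%N -> A i j = 0.

Definition bruhat_decomposition (R : nzRingType) (n : nat)
    (M U1 P U2 : 'M[R]_n) : Prop :=
  [/\ upper_triangular U1, upper_triangular U2, is_perm_mx P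
    & M = U1 *m P *m U2].

Definition is_row_permutation (R : nzRingType) (n : nat) (P : 'M[R]_n)
    (p : 'S_n) : Prop :=
  forall i j : 'I_n, (P i j != 0) = (j == p i).
Definition is_column_permutation (R : nzRingType) (n : nat) (P : 'M[R]_n)
    (p : 'S_n) : Prop :=
  forall i j : 'I_n, (P j i != 0) = (j == p i).

(* Cartan matrix of a quiver algebra with n vertices: omega i j = dim e_j A e_i.
   We record the properties that hold for a quiver algebra of finite global
   dimension: non-negative integer entries, positive diagonal (e_i A e_i
   contains e_i), invertible over Z. *)
Definition cartan_like (n : nat) (omega : 'M[int]_n) : Prop :=
  [/\ forall i j, 0 <= omega i j, forall i, 0 < omega i i & omega \in unitmx].

Definition cartan_real (R : realType) (n : nat) (omega : 'M[int]_n) : 'M[R]_n :=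
  map_mx (fun z : int => z%:~R) omega.

Definition coxeter_matrix (R : realType) (n : nat) (omega : 'M[int]_n) : 'M[R]_n :=
  - ((cartan_real R omega)^T *m invmx (cartan_real R omega)).

From HB Require Import structures.
From mathcomp Require Import all_boot all_order all_algebra all_fingroup.
From mathcomp Require Import all_classical all_reals.
Import Order.TTheory GRing.Theory Num.Theory.
Local Open Scope ring_scope.
Set Implicit Arguments. Unset Strict Implicit. Unset Printing Implicit Defensive.

(* As omega is lower triangular, -omega^T is upper triangular, so a Bruhat
   decomposition omega = U1 R U2 yields a Bruhat decomposition
   C_A = -omega^T omega^-1 = (-omega^T U2^-1) R^-1 U1^-1 of the Coxeter matrix.
   The permutation matrix of a Bruhat decomposition of an invertible matrix is
   unique, so the Coxeter permutation matrix is R^-1 = R^T, and the column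
   permutation of R^T is the row permutation of R. *)

Lemma inflationary_perm_eq1 n (s : 'S_n) : (forall i : 'I_n, i <= s i)%N -> s = 1%g.
Proof.
move=> le_s; apply/permP => i; rewrite perm1; apply/val_inj/eqP.
have sum_s : \sum_(j < n) nat_of_ord (s j) = \sum_(j < n) nat_of_ord j.
  rewrite [LHS](reindex_inj (@perm_inj _ s^-1)).
  by apply: eq_bigr => j _; rewrite permKV.
have [_] := leqif_sum (fun j (_ : true) => leqif_eq (le_s j)).
by rewrite sum_s eqxx => /esym/forallP/(_ i); rewrite eq_sym.
Qed.

Section UpperTriangularRing.
Variables (R : nzRingType) (n : nat).
Implicit Types (A B : 'M[R]_n) (p q : 'S_n).

Lemma upper_triangular_mul A B :
  upper_triangular A -> upper_triangular B -> upper_triangular (A *m B).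
Proof.
move=> A_upper B_upper i j lt_ji; rewrite mxE big1 // => k _.
have [lt_ki | le_ik] := ltnP k i; first by rewrite A_upper ?mul0r.
by rewrite B_upper ?mulr0 // (leq_trans lt_ji le_ik).
Qed.

Lemma upper_perm_mx_uniq A B p q : upper_triangular A -> (forall i, B i i != 0) ->
  A *m perm_mx p = perm_mx q *m B -> p = q.
Proof.
move=> A_upper B_diag AP_eq_QB; apply/eqP; rewrite eq_sym eq_mulgV1.
(* Entry (i, q i) of both sides: B (q i) (q i) != 0 forces i <= p^-1 (q i). *)
apply/eqP/inflationary_perm_eq1 => i; rewrite permM leqNgt.
apply: contra (B_diag (q i)) => lt_pq.
have := congr1 (fun M : 'M[R]_n => M i (q i)) AP_eq_QB.
by rewrite -[p]invgK -col_permE -row_permE !mxE => <-; rewrite A_upper.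
Qed.

End UpperTriangularRing.

Section UpperTriangularUnit.
Variables (R : comUnitRingType) (n : nat).
Implicit Types A : 'M[R]_n.

Lemma upper_triangular_det A : upper_triangular A -> \det A = \prod_i A i i.
Proof.
move=> A_upper; rewrite -det_tr det_trig.
  by apply: eq_bigr => i _; rewrite mxE.
by apply/is_trig_mxP => i j lt_ij; rewrite mxE A_upper.
Qed.

Lemma upper_triangular_unitmx_diag A i :
  upper_triangular A -> A \in unitmx -> A i i \is a GRing.unit.
Proof.
by move=> A_upper; rewrite unitmxE upper_triangular_det // => /unitr_prodP->.
Qed.

Lemma upper_triangular_invmx A :
  upper_triangular A -> A \in unitmx -> upper_triangular (invmx A).
Proof.
move=> A_upper A_unit i; set B := invmx A.
suff B_row_zero k (j : 'I_n) : (j < k)%N -> (j < i)%N -> B i j = 0.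
  by move=> j; apply: B_row_zero (ltnSn j).
elim: k j => // k IHk j; rewrite ltnS => le_jk lt_ji.
have : (B *m A) i j = 0 by rewrite mulVmx // mxE -val_eqE eq_sym (ltn_eqF lt_ji).
rewrite mxE (bigD1 j) //= big1 ?addr0 => [|l ne_lj].
  move/eqP; rewrite mulIr_eq0 => [/eqP//|].
  exact/mulIr/upper_triangular_unitmx_diag.
have [lt_lj | lt_jl | /val_inj eq_lj] := ltngtP l j.
- by rewrite IHk ?mul0r ?(leq_trans lt_lj le_jk) ?(ltn_trans lt_lj lt_ji).
- by rewrite A_upper ?mulr0.
- by rewrite eq_lj eqxx in ne_lj.
Qed.

End UpperTriangularUnit.

Section Bruhat.
Variables (R : comUnitRingType) (n : nat).
Implicit Types (p q : 'S_n).

Lemma bruhat_decomposition_unitmx (M U1 P U2 : 'M[R]_n) :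
  bruhat_decomposition M U1 P U2 -> M \in unitmx ->
  (U1 \in unitmx) && (U2 \in unitmx).
Proof.
by case=> _ _ _ ->; rewrite !unitmx_mul => /andP[/andP[-> _] ->].
Qed.

Lemma bruhat_perm_mx_uniq (M U1 U2 V1 V2 : 'M[R]_n) p q : M \in unitmx ->
  bruhat_decomposition M U1 (perm_mx p) U2 ->
  bruhat_decomposition M V1 (perm_mx q) V2 -> p = q.
Proof.
move=> M_unit bdU bdV; case/andP: (bruhat_decomposition_unitmx bdU M_unit).
case/andP: (bruhat_decomposition_unitmx bdV M_unit) => V1_unit V2_unit U1_unit U2_unit.
case: bdU bdV => U1_up U2_up _ ->{M M_unit} [V1_up V2_up _ UPU_eq_VQV].
have AP_eq_QB : invmx V1 *m U1 *m perm_mx p = perm_mx q *m (V2 *m invmx U2).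
  rewrite -mulmxA; apply: (canLR (mulKmx V1_unit)).
  by rewrite !mulmxA; apply: (canRL (mulmxK U2_unit)).
apply: upper_perm_mx_uniq AP_eq_QB.
  exact: upper_triangular_mul (upper_triangular_invmx V1_up V1_unit) U1_up.
have B_up := upper_triangular_mul V2_up (upper_triangular_invmx U2_up U2_unit).
have B_unit : V2 *m invmx U2 \in unitmx.
  by rewrite unitmx_mul unitmx_inv V2_unit U2_unit.
move=> i; have := upper_triangular_unitmx_diag i B_up B_unit.
by apply: contraTneq => ->; rewrite unitr0.
Qed.

Lemma bruhat_decomposition_mulmx_invmx (T M U1 U2 : 'M[R]_n) p :
  upper_triangular T -> M \in unitmx ->
  bruhat_decomposition M U1 (perm_mx p) U2 ->
  bruhat_decomposition (T *m invmx M) (T *m invmx U2) (perm_mx p^-1) (invmx U1).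
Proof.
move=> T_up M_unit bd; case/andP: (bruhat_decomposition_unitmx bd M_unit).
case: bd => U1_up U2_up _ M_eq U1_unit U2_unit; split.
- exact: upper_triangular_mul T_up (upper_triangular_invmx U2_up U2_unit).
- exact: upper_triangular_invmx.
- exact: perm_mx_is_perm.
apply: (canLR (mulmxK M_unit)); rewrite M_eq !mulmxA mulmxKV //.
by rewrite -(mulmxA _ (perm_mx p^-1)) -perm_mxM mulVg perm_mx1 mulmx1 mulmxKV.
Qed.

End Bruhat.

Lemma is_row_permutation_uniq (R : nzRingType) n (P : 'M[R]_n) (p q : 'S_n) :
  is_row_permutation P p -> is_row_permutation P q -> p = q.
Proof. by move=> Pp Pq; apply/permP => i; apply/eqP; rewrite -Pq Pp. Qed.

Lemma is_column_permutation_tr (R : nzRingType) n (P : 'M[R]_n) (p : 'S_n) :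
  is_column_permutation P p -> is_row_permutation P^T p.
Proof. by move=> Pp i j; rewrite mxE. Qed.

Theorem lemma2p6 (R : realType) (n : nat) (omega : 'M[int]_n)
    (U1 Rm U2 V1 P V2 : 'M[R]_n) (pA r : 'S_n) :
  cartan_like omega ->
  lower_triangular omega ->
  bruhat_decomposition (cartan_real R omega) U1 Rm U2 ->
  bruhat_decomposition (coxeter_matrix R omega) V1 P V2 ->
  is_column_permutation P pA ->
  is_row_permutation Rm r ->
  pA = r.
Proof.
move=> [_ _ omega_unit] omega_lower omega_bd cox_bd col_pA row_r.
case: (omega_bd) => _ _ /is_perm_mxP[s Rm_eq] _; rewrite Rm_eq in omega_bd row_r.
case: (cox_bd) => _ _ /is_perm_mxP[t P_eq] _; rewrite P_eq in cox_bd col_pA.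
set W := cartan_real R omega in omega_bd.
have W_unit : W \in unitmx by rewrite unitmxE det_map_mx rmorph_unit // -unitmxE.
have WT_up : upper_triangular (- W^T).
  by move=> i j lt_ji; rewrite !mxE omega_lower // mulr0z oppr0.
have cox_unit : coxeter_matrix R omega \in unitmx.
  rewrite /coxeter_matrix -/W -mulNmx unitmx_mul unitmx_inv W_unit andbT.
  by rewrite -scaleN1r unitmxZ ?unitrN1 // unitmx_tr.
have cox_bd_omega := bruhat_decomposition_mulmx_invmx WT_up W_unit omega_bd.
rewrite mulNmx in cox_bd_omega.
have t_eq := bruhat_perm_mx_uniq cox_unit cox_bd cox_bd_omega.
apply: is_row_permutation_uniq row_r.
by rewrite -[s]invgK -t_eq -tr_perm_mx; apply: is_column_permutation_tr.
Qed.
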